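(* Let $X$ be a real random variable with density $p$, $\mathbb{E}X=0$, $\mathrm{Var}(X)=1$, and $\mathbb{E}|X|^s<\infty$ for some $s>2$. Then there exist $C_1,C_2,C_3>0$ such that for every $A>0$, \[ D(X)\le C_1e^{A^2/2}\|p-\phi\|_2^2+(C_2+\|p-\phi\|_\infty)\big(\|p-\phi\|_1+e^{-A^2/2}\big)+C_3(\mathbb{E}|X|^s)^{2/s}\big(\|p-\phi\|_1+e^{-A^2/2}\big)^{1-2/s}. \]
   Context: $\phi(x)=(2\pi)^{-1/2}e^{-x^2/2}$ is the standard Gaussian density. For a random variable $X$, $D(X):=\mathrm{KL}(X\|G_X)$, the Kullback–Leibler divergence of $X$ from a Gaussian random variable $G_X$ with the same mean and variance as $X$; here $D(X)=\int p\ln(p/\phi)$. $\|\cdot\|_q$ is the $L^q(\mathbb{R})$ norm with respect to Lebesgue measure. *)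

From HB Require Import structures.
From mathcomp Require Import all_boot all_order all_algebra.
From mathcomp Require Import all_classical all_reals all_analysis.
Set Implicit Arguments. Unset Strict Implicit. Unset Printing Implicit Defensive.
Import Order.TTheory GRing.Theory Num.Theory.
Import numFieldNormedType.Exports.
Local Open Scope classical_set_scope.
Local Open Scope ring_scope.

Definition gauss_phi {R : realType} (x : R) : R :=
  (Num.sqrt (2 * pi))^-1 * expR (- (x ^+ 2) / 2).

Definition is_density {R : realType} (p : R -> R) : Prop :=
  measurable_fun [set: R] p /\ (forall x, 0 <= p x) /\
  (\int[@lebesgue_measure R]_x (p x)%:E = 1)%E.

(* D(X) = KL(X || G_X) = \int p ln (p / phi)  (with 0 ln 0 = 0) *)
Definition KLgauss {R : realType} (p : R -> R) : \bar R :=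
  (\int[@lebesgue_measure R]_x (p x * ln (p x / gauss_phi x))%:E)%E.

Definition LqR {R : realType} (q : \bar R) (f : R -> R) : \bar R :=
  Lnorm (@lebesgue_measure R) q (fun x => (f x)%:E).

Definition abs_moment {R : realType} (p : R -> R) (s : R) : \bar R :=
  (\int[@lebesgue_measure R]_x ((`|x| `^ s) * p x)%:E)%E.

(* Split the line at [|x| = A].  For [|x| <= A], [ln y <= y - 1] gives
   [p ln (p/phi) <= (p - phi)^2/phi + (p - phi)], and [1/phi <= sqrt(2 pi) e^{A^2/2}].
   For [|x| > A], [p ln (p/phi) <= p (p + sqrt(2 pi) + x^2/2)] and
   [p^2 <= 2 (p - phi)^2 + 2 phi]; [phi] is at most [e^{-A^2/2}] times the sum of the
   unit Gaussian densities centred at [A] and [-A], and [x^2/2 <= al |x|^s + be] with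
   [al], [be] balancing [be (||p - phi||_1 + e^{-A^2/2})] against [al E|X|^s], which
   produces [(E|X|^s)^{2/s} (...)^{1-2/s}]. *)

From HB Require Import structures.
From mathcomp Require Import all_boot all_order all_algebra.
From mathcomp Require Import all_classical all_reals all_analysis.
From mathcomp Require Import ring lra measurable_realfun.
Set Implicit Arguments. Unset Strict Implicit. Unset Printing Implicit Defensive.
Import Order.TTheory GRing.Theory Num.Theory.
Import numFieldNormedType.Exports.
Local Open Scope classical_set_scope.
Local Open Scope ring_scope.

Section gauss_phi.
Variable R : realType.
Local Notation S := (Num.sqrt (2 * pi) : R).

Lemma sqrt2pi_ge1 : 1 <= S.
Proof.
rewrite -[X in X <= _]sqrtr1 ler_sqrt; last by rewrite mulr_ge0// pi_ge0.
have := pi_ge2 R; lra.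
Qed.

Lemma sqrt2pi_gt0 : 0 < S.
Proof. exact: lt_le_trans ltr01 sqrt2pi_ge1. Qed.

Lemma gauss_phi_gt0 (x : R) : 0 < gauss_phi x.
Proof. by rewrite /gauss_phi mulr_gt0 ?expR_gt0// invr_gt0 sqrt2pi_gt0. Qed.

Lemma gauss_phi_le1 (x : R) : gauss_phi x <= 1.
Proof.
rewrite /gauss_phi -[leRHS]mulr1 ler_pM ?invr_ge0 ?sqrtr_ge0 ?expR_ge0//.
  by rewrite invf_le1 ?sqrt2pi_ge1 ?sqrt2pi_gt0.
by rewrite expR_le1 mulNr oppr_le0 mulr_ge0 ?sqr_ge0.
Qed.

Lemma gauss_phiV (x : R) : (gauss_phi x)^-1 = S * expR (x ^+ 2 / 2).
Proof. by rewrite /gauss_phi invfM invrK -expRN mulNr opprK. Qed.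

Lemma gauss_phiV_le (A x : R) : `|x| <= A -> (gauss_phi x)^-1 <= S * expR (A ^+ 2 / 2).
Proof.
move=> xA; rewrite gauss_phiV ler_wpM2l ?sqrtr_ge0// ler_expR ler_pM2r//.
by rewrite -real_normK ?num_real// lerXn2r ?nnegrE// (le_trans _ xA).
Qed.

Lemma ln_gauss_phi (x : R) : ln (gauss_phi x) = - ln S - x ^+ 2 / 2.
Proof.
rewrite /gauss_phi lnM ?posrE ?invr_gt0 ?expR_gt0 ?sqrt2pi_gt0// expRK.
by rewrite lnV ?posrE ?sqrt2pi_gt0// mulNr.
Qed.

Lemma measurable_gauss_phi : measurable_fun [set: R] (@gauss_phi R).
Proof.
apply: measurable_funM => //; apply: measurableT_comp => //.
by apply: measurable_funM => //; apply: measurableT_comp.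
Qed.

(* For [x >= A >= 0], [x^2 >= A^2 + (x - A)^2]; symmetrically for [x <= -A]. *)
Lemma gauss_phi_tail_le (A x : R) : 0 <= A -> A <= `|x| ->
  gauss_phi x <= expR (- (A ^+ 2) / 2) * (normal_pdf A 1 x + normal_pdf (- A) 1 x).
Proof.
move=> A0 Ax.
have peakE : S^-1 = normal_peak (1 : R).
  by rewrite /normal_peak expr1n mul1r mulr2n mulrDl mul1r.
rewrite /normal_pdf oner_eq0 /= /normal_fun expr1n /gauss_phi peakE.
have c0 := @normal_peak_ge0 R 1.
rewrite mulrDr !mulrA ![expR _ * normal_peak 1]mulrC -!mulrA -!expRD -mulrDr.
rewrite ler_wpM2l//; case: (lerP 0 x) => x0.
- rewrite ger0_norm// in Ax.
  by apply: ler_wpDr; [exact: expR_ge0|rewrite ler_expR; nra].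
- rewrite ltr0_norm// in Ax.
  by apply: ler_wpDl; [exact: expR_ge0|rewrite ler_expR; nra].
Qed.

End gauss_phi.

Section kl_integrand.
Variable R : realType.
Local Notation S := (Num.sqrt (2 * pi) : R).

Lemma xln_ratio_le_chi2 (P f : R) : 0 <= P -> 0 < f ->
  P * ln (P / f) <= (P - f) ^+ 2 / f + (P - f).
Proof.
move=> P0 f0; have -> : (P - f) ^+ 2 / f + (P - f) = P * (P / f - 1).
  by field; rewrite gt_eqF.
have [->|Pn0] := eqVneq P 0; first by rewrite !mul0r.
rewrite ler_wpM2l//; have := @le_ln1Dx _ (P / f - 1).
rewrite addrCA subrr addr0; apply.
by rewrite ltrBrDl subrr divr_gt0// lt_neqAle eq_sym Pn0.
Qed.

Lemma xln_ratio_gauss_phi_le (P x : R) : 0 <= P ->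
  P * ln (P / gauss_phi x) <= P * (P + S + x ^+ 2 / 2).
Proof.
move=> P0; have [->|Pn0] := eqVneq P 0; first by rewrite !mul0r.
have Pp : 0 < P by rewrite lt_neqAle eq_sym Pn0.
rewrite ler_wpM2l// ln_div ?posrE ?gauss_phi_gt0// ln_gauss_phi.
have := ln_sublinear Pp; have := ln_sublinear (@sqrt2pi_gt0 R); lra.
Qed.

Definition kl_majorant (p : R -> R) (A a b c g s x : R) : R :=
  a * (p x - gauss_phi x) ^+ 2 + b * `|p x - gauss_phi x|
  + c * (normal_pdf A 1 x + normal_pdf (- A) 1 x) + g * (`|x| `^ s * p x).

Lemma kl_integrand_le (p : R -> R) (A al be s x : R) :
  0 <= A -> 0 <= al -> 0 <= be -> 0 <= p x ->
  (A < `|x| -> x ^+ 2 / 2 <= al * `|x| `^ s + be) ->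
  p x * ln (p x / gauss_phi x) <=
    kl_majorant p A (S * expR (A ^+ 2 / 2) + 2) (1 + S + be)
      ((2 + S + be) * expR (- (A ^+ 2) / 2)) al s x.
Proof.
move=> A0 al0 be0 P0 moment_bound; rewrite /kl_majorant -mulrA.
set P := p x in P0 *; set f := gauss_phi x; set K := S * expR (A ^+ 2 / 2).
set D := P - f; set tail := expR _ * _; set Xs := `|x| `^ s.
have S1 := @sqrt2pi_ge1 R; have f0 : 0 < f := gauss_phi_gt0 x.
have K0 : 0 <= K by rewrite mulr_ge0 ?expR_ge0 ?sqrtr_ge0.
have D2_ge0 : 0 <= D ^+ 2 := sqr_ge0 D.
have D_le : D <= `|D| := ler_norm D.
have XsP_ge0 : 0 <= al * (Xs * P) by rewrite !mulr_ge0 ?powR_ge0.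
have tail_ge0 : 0 <= tail.
  by rewrite mulr_ge0 ?expR_ge0 ?addr_ge0 ?normal_pdf_ge0.
have [xA|Ax] := lerP `|x| A.
- have := xln_ratio_le_chi2 P0 f0; rewrite -/D => chi2.
  have chi2_le : D ^+ 2 / f <= D ^+ 2 * K by rewrite ler_wpM2l// gauss_phiV_le.
  have : 0 <= (2 + S + be) * tail by rewrite mulr_ge0//; lra.
  have : 0 <= (S + be) * `|D| by rewrite mulr_ge0//; lra.
  lra.
- have := xln_ratio_gauss_phi_le x P0; rewrite -/f => tail_kl.
  have quad_le : P * (x ^+ 2 / 2) <= P * (al * Xs + be).
    by rewrite ler_wpM2l//; exact: moment_bound.
  have P2_le : P ^+ 2 <= 2 * D ^+ 2 + 2 * f.
    have : f ^+ 2 <= f.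
      by rewrite expr2; apply: ler_piMl; [exact: ltW|exact: gauss_phi_le1].
    have := sqr_ge0 (P - 2 * f); rewrite /D; nra.
  have f_le : (2 + S + be) * f <= (2 + S + be) * tail.
    by rewrite ler_wpM2l ?gauss_phi_tail_le ?(ltW Ax)//; lra.
  have P_le : (S + be) * P <= (S + be) * (`|D| + f).
    by rewrite ler_wpM2l; [|lra|rewrite /D in D_le; lra].
  have : 0 <= K * D ^+ 2 by rewrite mulr_ge0.
  have : 0 <= `|D| := normr_ge0 D.
  have : P * (P + S + x ^+ 2 / 2) = P ^+ 2 + S * P + P * (x ^+ 2 / 2) by ring.
  have : P * (al * Xs + be) = al * (Xs * P) + be * P by ring.
  lra.
Qed.

End kl_integrand.

Section moment_split.
Variable R : realType.
Implicit Types A c r s x m T : R.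

Lemma sqr_le_powR r s x : 0 < r -> 2 < s -> r <= `|x| ->
  x ^+ 2 <= r `^ (2 - s) * `|x| `^ s.
Proof.
move=> r0 s2 rx; have x0 : 0 < `|x| := lt_le_trans r0 rx.
have -> : `|x| `^ s = `|x| `^ (s - 2) * x ^+ 2.
  rewrite -real_normK ?num_real// -powR_mulrn// -powRD ?subrK//.
  by apply/implyP => _; rewrite gt_eqF.
have r_inv : r `^ (2 - s) * r `^ (s - 2) = 1.
  rewrite -powRD; last by apply/implyP => _; rewrite gt_eqF.
  by rewrite addrC subrKA subrr powRr0.
rewrite mulrA -[leLHS]mul1r; apply: ler_wpM2r; first exact: sqr_ge0.
rewrite -[X in X <= _]r_inv; apply: ler_wpM2l; first exact: powR_ge0.
by apply: ge0_ler_powR; rewrite ?nnegrE ?subr_ge0 ?(ltW s2) ?(ltW r0).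
Qed.

Lemma sqr_le_powRD r s x : 0 < r -> 2 < s ->
  x ^+ 2 <= r `^ (2 - s) * `|x| `^ s + r ^+ 2.
Proof.
move=> r0 s2; have : 0 <= r `^ (2 - s) * `|x| `^ s by rewrite mulr_ge0 ?powR_ge0.
have [rx|xr] := lerP r `|x|; first by have := sqr_le_powR r0 s2 rx; nra.
have : x ^+ 2 <= r ^+ 2.
  by rewrite -real_normK ?num_real// lerXn2r ?nnegrE ?(ltW r0) ?(ltW xr).
lra.
Qed.

Lemma gt0_powRE r x : 0 < r -> r `^ x = expR (x * ln r).
Proof. by move=> r0; rewrite /powR gt_eqF. Qed.

(* [r = (m/T)^{1/s}] balances [r^2 T] against [r^{2-s} m]. *)
Lemma powR_balance m T s : 0 < m -> 0 < T -> 0 < s ->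
  let r := expR ((ln m - ln T) / s) in
  r ^+ 2 * T + r `^ (2 - s) * m = 2 * (m `^ (2 / s) * T `^ (1 - 2 / s)).
Proof.
move=> m0 T0 s0 r; have sN0 : s != 0 by rewrite gt_eqF.
rewrite gt0_powRE ?expR_gt0// expRK !gt0_powRE// -expRM_natl.
rewrite -{2}(lnK (x := T)) ?posrE// -{3}(lnK (x := m)) ?posrE// -!expRD.
have -> : 2%:R * ((ln m - ln T) / s) + ln T = 2 / s * ln m + (1 - 2 / s) * ln T.
  by field.
have -> : (2 - s) * ((ln m - ln T) / s) + ln m = 2 / s * ln m + (1 - 2 / s) * ln T.
  by field.
ring.
Qed.

Lemma moment_split A m T s : 0 < A -> 0 <= m -> 0 < T -> 2 < s ->
  exists al be, [/\ 0 <= al, 0 <= be,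
    forall x, A < `|x| -> x ^+ 2 / 2 <= al * `|x| `^ s + be &
    be * T + al * m <= m `^ (2 / s) * T `^ (1 - 2 / s)].
Proof.
move=> A0 m0 T0 s2; have [->|mN0] := eqVneq m 0.
  exists (A `^ (2 - s) / 2), 0; split => //.
  - by rewrite divr_ge0 ?powR_ge0.
  - by move=> x Ax; have := sqr_le_powR A0 s2 (ltW Ax); lra.
  - by rewrite mulr0 mul0r addr0 mulr_ge0 ?powR_ge0.
have mp : 0 < m by rewrite lt_neqAle eq_sym mN0.
set r := expR ((ln m - ln T) / s).
exists (r `^ (2 - s) / 2), (r ^+ 2 / 2); split.
- by rewrite divr_ge0 ?powR_ge0.
- by rewrite divr_ge0 ?sqr_ge0.
- move=> x _; have := sqr_le_powRD x (expR_gt0 ((ln m - ln T) / s)) s2.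
  rewrite -/r; lra.
- have s0 : 0 < s by apply: lt_trans s2.
  by have := powR_balance mp T0 s0; cbv zeta; rewrite -/r; lra.
Qed.

Lemma powRMl_le c x r : 1 <= c -> 0 <= x -> r <= 1 ->
  (c * x) `^ r <= c * x `^ r.
Proof.
move=> c1 x0 r1; rewrite powRM ?(le_trans ler01 c1)//.
by apply: ler_wpM2r; [exact: powR_ge0|exact: ler1_powR].
Qed.

End moment_split.

Section real_integrals.
Context d (T : measurableType d) (R : realType) (mu : measure T R).
Local Open Scope ereal_scope.

Lemma le_integral_ge0r (f g : T -> R) :
  measurable_fun [set: T] f -> measurable_fun [set: T] g ->
  (forall x, (f x <= g x)%R) -> (forall x, (0 <= g x)%R) ->
  \int[mu]_x (f x)%:E <= \int[mu]_x (g x)%:E.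
Proof.
move=> mf mg fg g0; rewrite integralE.
apply: (@le_trans _ _ (\int[mu]_x ((EFin \o f)^\+ x))).
  rewrite -[leRHS]sube0; apply: leeB => //.
  by apply: integral_ge0 => x _; exact: funeneg_ge0.
apply: ge0_le_integral => //.
- by apply: measurable_funepos; exact/measurable_EFinP.
- exact/measurable_EFinP.
- by move=> x _; rewrite funeposE /= ge_max !lee_fin fg g0.
Qed.

Lemma ge0_integralD_EFin (f g : T -> R) :
  (forall x, (0 <= f x)%R) -> (forall x, (0 <= g x)%R) ->
  measurable_fun [set: T] f -> measurable_fun [set: T] g ->
  \int[mu]_x (f x + g x)%:E = \int[mu]_x (f x)%:E + \int[mu]_x (g x)%:E.
Proof.
move=> f0 g0 mf mg; under eq_integral do rewrite EFinD.
apply: ge0_integralD => //.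
- by move=> x _; rewrite lee_fin.
- exact/measurable_EFinP.
- by move=> x _; rewrite lee_fin.
- exact/measurable_EFinP.
Qed.

Lemma ge0_integralZl_EFin (k : R) (f : T -> R) :
  (0 <= k)%R -> (forall x, (0 <= f x)%R) -> measurable_fun [set: T] f ->
  \int[mu]_x (k * f x)%:E = k%:E * \int[mu]_x (f x)%:E.
Proof.
move=> k0 f0 mf; under eq_integral do rewrite EFinM.
apply: ge0_integralZl => //; first exact/measurable_EFinP.
by move=> x _; rewrite lee_fin.
Qed.

End real_integrals.

Section KLgauss_bound.
Variable R : realType.
Local Notation mu := (@lebesgue_measure R).
Local Notation S := (Num.sqrt (2 * pi) : R).
Local Open Scope ereal_scope.

Lemma LqR1E (f : R -> R) : LqR 1%:E f = \int[mu]_x `|f x|%:E.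
Proof. by rewrite /LqR Lnorm1; apply: eq_integral => x _; rewrite abse_EFin. Qed.

Lemma LqR2_sqrE (f : R -> R) : LqR 2%:E f `^ 2 = \int[mu]_x (f x ^+ 2)%:E.
Proof.
rewrite /LqR poweR_Lnorm//; apply: eq_integral => x _.
by rewrite abse_EFin poweR_EFin powR_mulrn// real_normK// num_real.
Qed.

Lemma integral_normal_pdf_pair (A : R) :
  \int[mu]_x (normal_pdf A 1 x + normal_pdf (- A) 1 x)%:E = 2%:E.
Proof.
rewrite ge0_integralD_EFin; last 4 first.
- exact: normal_pdf_ge0.
- exact: normal_pdf_ge0.
- exact: measurable_normal_pdf.
- exact: measurable_normal_pdf.
by rewrite !integral_normal_pdf -EFinD.
Qed.

Lemma measurable_kl_integrand (p : R -> R) : measurable_fun [set: R] p ->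
  measurable_fun [set: R] (fun x => p x * ln (p x / gauss_phi x))%R.
Proof.
move=> mp; apply: measurable_funM => //.
apply: measurableT_comp; first exact: measurable_ln.
under eq_fun do rewrite gauss_phiV.
apply: measurable_funM => //; apply: measurable_funM => //.
by apply: measurableT_comp => //; apply: measurable_funM => //; exact: measurable_funX.
Qed.

Section kl_majorant.
Variables (p : R -> R) (A : R).
Hypotheses (mp : measurable_fun [set: R] p) (p0 : forall x, (0 <= p x)%R).
Local Notation d := (fun x => p x - gauss_phi x)%R.
Local Notation N := (fun x => normal_pdf A 1 x + normal_pdf (- A) 1 x)%R.

Let md : measurable_fun [set: R] d.
Proof. by apply: measurable_funB => //; exact: measurable_gauss_phi. Qed.

Let md2 : measurable_fun [set: R] (fun x => d x ^+ 2)%R.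
Proof. exact: measurable_funX. Qed.

Let mnd : measurable_fun [set: R] (fun x => `|d x|)%R.
Proof. by apply: measurableT_comp => //; exact: normr_measurable. Qed.

Let mN : measurable_fun [set: R] N.
Proof. by apply: measurable_funD; exact: measurable_normal_pdf. Qed.

Let mX s : measurable_fun [set: R] (fun x => `|x| `^ s * p x)%R.
Proof. by apply: measurable_funM => //; exact: measurableT_comp (measurable_powR s) _. Qed.

Lemma measurable_kl_majorant a b c g s :
  measurable_fun [set: R] (kl_majorant p A a b c g s).
Proof.
do 3 (apply: measurable_funD; last exact: measurable_funM).
exact: measurable_funM.
Qed.

Lemma kl_majorant_ge0 a b c g s x :
  (0 <= a)%R -> (0 <= b)%R -> (0 <= c)%R -> (0 <= g)%R ->
  (0 <= kl_majorant p A a b c g s x)%R.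
Proof.
move=> a0 b0 c0 g0; rewrite /kl_majorant !addr_ge0//; apply: mulr_ge0 => //.
- exact: sqr_ge0.
- by rewrite addr_ge0 ?normal_pdf_ge0.
- by rewrite mulr_ge0 ?powR_ge0.
Qed.

Lemma integral_kl_majorant a b c g s :
  (0 <= a)%R -> (0 <= b)%R -> (0 <= c)%R -> (0 <= g)%R ->
  \int[mu]_x (kl_majorant p A a b c g s x)%:E
  = a%:E * LqR 2%:E d `^ 2 + b%:E * LqR 1%:E d + (c * 2)%:E
    + g%:E * abs_moment p s.
Proof.
move=> a0 b0 c0 g0.
pose u1 x := (a * d x ^+ 2)%R; pose u2 x := (b * `|d x|)%R.
pose u3 x := (c * N x)%R; pose u4 x := (g * (`|x| `^ s * p x))%R.
have u1_0 x : (0 <= u1 x)%R by rewrite mulr_ge0 ?sqr_ge0.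
have u2_0 x : (0 <= u2 x)%R by rewrite mulr_ge0.
have u3_0 x : (0 <= u3 x)%R by rewrite mulr_ge0 ?addr_ge0 ?normal_pdf_ge0.
have u4_0 x : (0 <= u4 x)%R by rewrite !mulr_ge0 ?powR_ge0.
have mu1 : measurable_fun [set: R] u1 by exact: measurable_funM.
have mu2 : measurable_fun [set: R] u2 by exact: measurable_funM.
have mu3 : measurable_fun [set: R] u3 by exact: measurable_funM.
rewrite (@ge0_integralD_EFin _ _ _ mu (fun x => u1 x + u2 x + u3 x)%R u4); last 4 first.
- by move=> x; rewrite !addr_ge0.
- by [].
- by apply: measurable_funD => //; exact: measurable_funD.
- by apply: measurable_funM => //; exact: mX.
rewrite (@ge0_integralD_EFin _ _ _ mu (fun x => u1 x + u2 x)%R u3) //; last 2 first.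
- by move=> x; rewrite addr_ge0.
- exact: measurable_funD.
rewrite (@ge0_integralD_EFin _ _ _ mu u1 u2) //.
rewrite /u1 /u2 /u3 /u4 !ge0_integralZl_EFin //.
- by rewrite LqR2_sqrE LqR1E integral_normal_pdf_pair -!EFinM.
- by move=> x; rewrite mulr_ge0 ?powR_ge0.
- exact: mX.
- by move=> x; rewrite addr_ge0 ?normal_pdf_ge0.
- by move=> x; exact: sqr_ge0.
Qed.

End kl_majorant.

Lemma KLgauss_le (p : R -> R) (A al be s : R) :
  measurable_fun [set: R] p -> (forall x, 0 <= p x)%R ->
  (0 <= A)%R -> (0 <= al)%R -> (0 <= be)%R ->
  (forall x, A < `|x| -> x ^+ 2 / 2 <= al * `|x| `^ s + be)%R ->
  let d := fun x => (p x - gauss_phi x)%R in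
  (KLgauss p <= (S * expR (A ^+ 2 / 2) + 2)%:E * LqR 2%:E d `^ 2
    + (1 + S + be)%:E * LqR 1%:E d
    + ((2 + S + be) * expR (- (A ^+ 2) / 2) * 2)%:E
    + al%:E * abs_moment p s).
Proof.
move=> mp p0 A0 al0 be0 moment_bound /=; have S1 := @sqrt2pi_ge1 R.
have a0 : (0 <= S * expR (A ^+ 2 / 2) + 2)%R.
  by rewrite addr_ge0 ?mulr_ge0 ?expR_ge0 ?sqrtr_ge0.
have b0 : (0 <= 1 + S + be)%R by lra.
have c0 : (0 <= (2 + S + be) * expR (- (A ^+ 2) / 2))%R.
  by rewrite mulr_ge0 ?expR_ge0//; lra.
rewrite -(integral_kl_majorant A mp p0 s a0 b0 c0 al0).
apply: le_integral_ge0r.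
- exact: measurable_kl_integrand.
- exact: measurable_kl_majorant.
- by move=> x; exact: kl_integrand_le A0 al0 be0 (p0 x) (moment_bound x).
- by move=> x; exact: kl_majorant_ge0.
Qed.

Lemma abs_moment_ge0 (p : R -> R) s : (forall x, 0 <= p x)%R -> 0 <= abs_moment p s.
Proof. by move=> p0; apply: integral_ge0 => x _; rewrite lee_fin mulr_ge0 ?powR_ge0. Qed.

Lemma KLgauss_le_L1_moment (p : R -> R) (A s l1 m : R) :
  measurable_fun [set: R] p -> (forall x, 0 <= p x)%R -> (0 < A)%R -> (2 < s)%R ->
  let d := fun x => (p x - gauss_phi x)%R in
  let t := (l1 + expR (- (A ^+ 2) / 2))%R in
  LqR 1%:E d = l1%:E -> abs_moment p s = m%:E ->
  (KLgauss p <= (S * expR (A ^+ 2 / 2) + 2)%:E * LqR 2%:E d `^ 2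
    + (2 * (2 + S) * t + 2 * (m `^ (2 / s) * t `^ (1 - 2 / s)))%:E).
Proof.
move=> mp p0 A0 s2 d t L1E momentE.
have S1 := @sqrt2pi_ge1 R; have E0 := expR_gt0 (- (A ^+ 2) / 2).
have l1_ge0 : (0 <= l1)%R by rewrite -lee_fin -L1E Lnorm_ge0.
have m_ge0 : (0 <= m)%R by rewrite -lee_fin -momentE abs_moment_ge0.
have t0 : (0 < t)%R by rewrite /t; lra.
have [al [be [al0 be0 moment_bound split_le]]] :=
  moment_split A0 m_ge0 (mulr_gt0 (ltr0n _ 2) t0) s2.
apply: le_trans (KLgauss_le mp p0 (ltW A0) al0 be0 moment_bound) _.
rewrite -/d L1E momentE -!addeA -!EFinM -!EFinD leeD2l// lee_fin.
have : (m `^ (2 / s) * (2 * t) `^ (1 - 2 / s) <=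
        m `^ (2 / s) * (2 * t `^ (1 - 2 / s)))%R.
  apply: ler_wpM2l; first exact: powR_ge0.
  have : (0 <= 2 / s)%R by rewrite divr_ge0//; lra.
  by move=> ?; apply: powRMl_le; [lra|exact: ltW|lra].
have : (0 <= S * l1)%R by rewrite mulr_ge0//; lra.
have : (0 <= be * l1)%R by rewrite mulr_ge0.
rewrite /t in split_le *; lra.
Qed.

Lemma KLgauss_le_fin (p : R -> R) (A s : R) :
  measurable_fun [set: R] p -> (forall x, 0 <= p x)%R -> (0 < A)%R -> (2 < s)%R ->
  let d := fun x => (p x - gauss_phi x)%R in
  let t := LqR 1%:E d + (expR (- (A ^+ 2) / 2))%:E in
  LqR 1%:E d \is a fin_num -> abs_moment p s \is a fin_num ->
  (KLgauss p <= (S + 2)%:E * (expR (A ^+ 2 / 2))%:E * LqR 2%:E d `^ 2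
    + ((2 * (2 + S))%:E + LqR +oo d) * t
    + 2%:E * abs_moment p s `^ (2 / s) * t `^ (1 - 2 / s)).
Proof.
move=> mp p0 A0 s2 d t /fineK/esym L1E /fineK/esym momentE.
set l1 := fine _ in L1E; set m := fine _ in momentE.
have := KLgauss_le_L1_moment mp p0 A0 s2 L1E momentE; cbv zeta => /le_trans; apply.
have l1_ge0 : (0 <= l1)%R by rewrite -lee_fin -L1E Lnorm_ge0.
rewrite /t L1E momentE -EFinD !poweR_EFin -!EFinM EFinD -addeA leeD//.
  rewrite lee_wpmul2r ?poweR_ge0// lee_fin.
  have : (1 <= expR (A ^+ 2 / 2))%R by rewrite -expR0 ler_expR divr_ge0 ?sqr_ge0.
  have := @sqrt2pi_ge1 R; nra.
rewrite [leLHS]EFinD mulrA leeD2r// EFinM lee_wpmul2r ?leeDl ?Lnorm_ge0// lee_fin.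
by rewrite addr_ge0 ?expR_ge0.
Qed.

End KLgauss_bound.

Theorem theorem2p3 (R : realType) (p : R -> R) (s : R) :
  is_density p ->
  (@lebesgue_measure R).-integrable [set: R] (fun x => (x * p x)%:E) ->
  (\int[@lebesgue_measure R]_x (x * p x)%:E = 0)%E ->
  (\int[@lebesgue_measure R]_x (x ^+ 2 * p x)%:E = 1)%E ->
  2 < s ->
  (abs_moment p s < +oo)%E ->
  exists C1 C2 C3 : R, 0 < C1 /\ 0 < C2 /\ 0 < C3 /\
    forall A : R, 0 < A ->
      let d := fun x => p x - gauss_phi x in
      let t := (LqR 1%:E d + (expR (- (A ^+ 2) / 2))%:E)%E in
      (KLgauss p <=
         C1%:E * (expR (A ^+ 2 / 2))%:E * (LqR 2%:E d) `^ 2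
       + (C2%:E + LqR +oo d) * t
       + C3%:E * (abs_moment p s) `^ (2 / s) * t `^ (1 - 2 / s))%E.
Proof.
move=> [mp [p0 _]] _ _ _ s2 moment_fin.
exists (Num.sqrt (2 * pi) + 2), (2 * (2 + Num.sqrt (2 * pi))), 2.
have := @sqrt2pi_ge1 R; do 3 (split; first lra).
move=> A A0 /=; set d := fun x => _; set t := (LqR 1%:E d + _)%E.
have moment_fin_num : abs_moment p s \is a fin_num.
  by rewrite ge0_fin_numE ?abs_moment_ge0.
have L1_ge0 : (0 <= LqR 1%:E d)%E := Lnorm_ge0 _ _ _.
have [L1_fin|/fin_numPn[L1|L1]] := boolP (LqR 1%:E d \is a fin_num).
- exact: KLgauss_le_fin.
- by rewrite L1 in L1_ge0.
have -> : t = +oo%E by rewrite /t L1 addye.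
have Linf_ge0 : (0 <= LqR +oo d)%E := Lnorm_ge0 _ _ _.
rewrite gt0_muley; last by rewrite (lt_le_trans _ (leeDl _ Linf_ge0))// lte_fin; lra.
apply: le_trans (leey _) _; rewrite lee_paddr ?lee_paddl//.
  by rewrite !mule_ge0 ?poweR_ge0.
by rewrite !mule_ge0 ?poweR_ge0 ?lee_fin ?expR_ge0//; lra.
Qed.
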